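(* Let $H$ be a Kekul\'ean hexagonal system. Let $\mathbb{C}$ be the set of all Clar covers of $H$, ordered by $C\le C'$ iff $f(C)\subseteq f(C')$, and let $\mathbb{Q}$ be the set of all induced subgraphs of $R(H)$ that are isomorphic to some hypercube $Q_n$ ($n\ge0$), ordered by $Q\le Q'$ iff $Q$ is a subgraph of $Q'$. Then $(\mathbb{C},\le)$ and $(\mathbb{Q},\le)$ are isomorphic posets (via $f$).
   Context: A hexagonal system is a 2-connected finite plane graph in which every interior face is a regular hexagon of side length one; its hexagons are the boundaries of its interior faces; it is Kekul\'ean if it has a perfect matching. A Clar cover of $H$ is a spanning subgraph each of whose components is a hexagon of $H$ or a single edge. The resonance graph $R(H)$ has the perfect matchings of $H$ as vertices, two adjacent iff their symmetric difference is the edge set of a hexagon of $H$. For a Clar cover $C$, $f(C)$ denotes the subgraph of $R(H)$ induced by all perfect matchings $M$ of $H$ such that every hexagon component of $C$ is $M$-alternating and every single-edge component of $C$ belongs to $M$. *)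

(* Combinatorial model of hexagonal systems inside the
   hexagonal lattice, drawn as the "brick wall" lattice on Z x Z. *)
From HB Require Import structures.
From mathcomp Require Import all_boot all_order all_algebra.
Set Implicit Arguments. Unset Strict Implicit. Unset Printing Implicit Defensive.
Import Order.TTheory GRing.Theory Num.Theory.
Local Open Scope ring_scope.

Definition point := (int * int)%type.

(* lattice edges: (p, false) joins p and p+(1,0); (p, true) joins p and p+(0,1) *)
Definition edge := (point * bool)%type.

Definition ends (e : edge) : point * point :=
  let: (p, b) := e in
  if b then (p, (p.1, p.2 + 1)) else (p, (p.1 + 1, p.2)).

(* A cell (hexagonal face of the lattice) is named by its lower-left corner
   (x,y) with x + y even; its six vertices are
   (x,y),(x+1,y),(x+2,y),(x+2,y+1),(x+1,y+1),(x,y+1) in cyclic order. *)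
Definition is_cell (c : point) : bool := (2 %| c.1 + c.2)%Z.

Definition hex_verts (c : point) : seq point :=
  let: (x, y) := c in
  [:: (x, y); (x + 1, y); (x + 2, y); (x + 2, y + 1); (x + 1, y + 1); (x, y + 1)].

Definition hex_edges (c : point) : seq edge :=
  let: (x, y) := c in
  [:: ((x, y), false); ((x + 1, y), false); ((x + 2, y), true);
      ((x + 1, y + 1), false); ((x, y + 1), false); ((x, y), true)].

Definition cell_adj (c d : point) : bool :=
  has (fun e => e \in hex_edges d) (hex_edges c).

Definition edgesH (S : seq point) : seq edge := flatten (map hex_edges S).
Definition vertsH (S : seq point) : seq point := flatten (map hex_verts S).

Definition adjH (S : seq point) (a b : point) : bool :=
  has (fun e => (ends e == (a, b)) || (ends e == (b, a))) (edgesH S).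

(* 2-connected: at least 3 vertices and connected after deleting any vertex w
   (w outside the graph gives plain connectivity) *)
Definition two_connected (S : seq point) : Prop :=
  (3 <= size (undup (vertsH S)))%N /\
  forall w u v : point, u \in vertsH S -> v \in vertsH S -> u != w -> v != w ->
    exists p : seq point, path (fun a b => adjH S a b && (b != w)) u p && (last u p == v).

(* a cell strictly to the right of every cell of S lies in the unbounded face *)
Definition far (S : seq point) (c : point) : bool := all (fun s => s.1 + 2 < c.1) S.

(* every cell not in S lies in the unbounded face of G(S): it is joined to a far
   cell by a chain of edge-adjacent cells not in S *)
Definition hole_free (S : seq point) : Prop :=
  forall c : point, is_cell c -> c \notin S ->
    exists p : seq point,
      path (fun a b => [&& cell_adj a b, is_cell b & b \notin S]) c p && far S (last c p).

(* S is the set of hexagons (interior faces) of a hexagonal system G(S) *)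
Definition hexagonal_system (S : seq point) : Prop :=
  [/\ S != [::], all is_cell S, two_connected S & hole_free S].

Definition VH (S : seq point) := seq_sub (vertsH S).
Definition EH (S : seq point) := seq_sub (edgesH S).

Definition incident (S : seq point) (v : VH S) (e : EH S) : bool :=
  ((ends (val e)).1 == val v) || ((ends (val e)).2 == val v).

Definition perfect_matching (S : seq point) (M : {set EH S}) : bool :=
  [forall v : VH S, #|[set e in M | incident v e]| == 1%N].

Definition kekulean (S : seq point) : Prop := exists M : {set EH S}, perfect_matching M.

Definition pm_set (S : seq point) : {set {set EH S}} := [set M | perfect_matching M].

Definition hexE (S : seq point) (h : point) : {set EH S} :=
  [set e : EH S | val e \in hex_edges h].
Definition hexV (S : seq point) (h : point) : {set VH S} :=
  [set v : VH S | val v \in hex_verts h].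

Definition radj (S : seq point) (M M' : {set EH S}) : bool :=
  has (fun h => (M :\: M') :|: (M' :\: M) == hexE S h) S.

Definition inM (S : seq point) (M : {set EH S}) (e : edge) : bool :=
  [exists x in M, val x == e].

Definition alternating (S : seq point) (M : {set EH S}) (h : point) : bool :=
  let b := map (inM M) (hex_edges h) in
  (b == [:: true; false; true; false; true; false]) ||
  (b == [:: false; true; false; true; false; true]).

Definition crel (S : seq point) (C : {set EH S}) : rel (VH S) :=
  fun u v => [exists e in C, (ends (val e) == (val u, val v)) || (ends (val e) == (val v, val u))].

Definition comp (S : seq point) (C : {set EH S}) (v : VH S) : {set VH S} :=
  [set u | connect (crel C) v u].

Definition compE (S : seq point) (C : {set EH S}) (v : VH S) : {set EH S} :=
  [set e in C | [exists u in comp C v, incident u e]].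

Definition hex_comp (S : seq point) (C : {set EH S}) (h : point) : bool :=
  (h \in S) && [exists v, (comp C v == hexV S h) && (compE C v == hexE S h)].

Definition edge_comp (S : seq point) (C : {set EH S}) (e : EH S) : bool :=
  [exists v, (#|comp C v| == 2%N) && (compE C v == [set e])].

Definition clar_cover (S : seq point) (C : {set EH S}) : bool :=
  [forall v : VH S,
     [exists h : seq_sub S, (comp C v == hexV S (val h)) && (compE C v == hexE S (val h))]
     || ((#|comp C v| == 2%N) && (#|compE C v| == 1%N))].

(* f(C), given by its vertex set (an induced subgraph of R(H)) *)
Definition fC (S : seq point) (C : {set EH S}) : {set {set EH S}} :=
  [set M in pm_set S |
     [forall h : seq_sub S, hex_comp C (val h) ==> alternating M (val h)] &&
     [forall e : EH S, edge_comp C e ==> (e \in M)]].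

Definition clar_le (S : seq point) (C C' : {set EH S}) : bool := fC C \subset fC C'.

(* hypercube Q_n on {ffun 'I_n -> bool} *)
Definition hamming (n : nat) (a b : {ffun 'I_n -> bool}) : nat := #|[set i | a i != b i]|.

Definition cube_sub (S : seq point) (X : {set {set EH S}}) : Prop :=
  X \subset pm_set S /\
  exists n : nat, exists phi : {ffun 'I_n -> bool} -> {set EH S},
    [/\ injective phi, X = [set phi a | a : {ffun 'I_n -> bool}] &
        forall a b, radj (phi a) (phi b) = (hamming a b == 1%N)].

(* Apart from the shape of a single hexagon, the only geometric fact used is that two
   distinct hexagons share at most one edge.

   Call hexagons h_1, ..., h_n resonant for a perfect matching M if they are
   pairwise vertex-disjoint and M-alternating. Then C = M ∪ E(h_1) ∪ ... ∪ E(h_n)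
   is a Clar cover whose hexagon components are the h_i and whose single edges are
   the other edges of M, and f(C) = {M Δ ⋃_{i ∈ a} E(h_i) | a ⊆ [n]} is a cube in
   R(H) with coordinate i flipping h_i; its union is C, so f is injective. Every
   Clar cover has this form: take M to be its single edges together with every
   other edge of each hexagon component.

   Conversely, let φ : Q_n → R(H) be an induced cube. Each neighbour φ(e_i) of
   φ(0) differs from it by a hexagon h_i. Around a square a, a - e_i, a - e_j,
   a - e_i - e_j of the cube the two flips from a - e_i - e_j to a compose to the
   same set, and as hexagons share at most one edge this forces opposite sides to
   flip the same hexagon; by induction on |a|, φ(a) = φ(0) Δ ⋃_{i ∈ a} E(h_i).
   The h_i are pairwise vertex-disjoint, because at a common vertex of h_i and h_j
   the matchings φ(0) and φ(e_i) would cover it by two distinct edges lying in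
   both hexagons. Hence the h_i are resonant for φ(0) and the cube is f of the
   corresponding Clar cover. *)

From mathcomp Require Import all_boot all_order all_algebra zify.
Set Implicit Arguments. Unset Strict Implicit. Unset Printing Implicit Defensive.

(** * Symmetric difference of finite sets *)

Section SymDiff.
Variable T : finType.
Implicit Types A B D : {set T}.

Definition symdiff A B := (A :\: B) :|: (B :\: A).

Lemma in_symdiff A B x : (x \in symdiff A B) = (x \in A) (+) (x \in B).
Proof. by rewrite !inE; case: (x \in A); case: (x \in B). Qed.

Lemma symdiffC A B : symdiff A B = symdiff B A.
Proof. by apply/setP => x; rewrite !in_symdiff addbC. Qed.

Lemma symdiffA A B D : symdiff (symdiff A B) D = symdiff A (symdiff B D).
Proof. by apply/setP => x; rewrite !in_symdiff addbA. Qed.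

Lemma symdiffv A : symdiff A A = set0.
Proof. by apply/setP => x; rewrite in_symdiff addbb inE. Qed.

Lemma symdiff0 A : symdiff A set0 = A.
Proof. by apply/setP => x; rewrite in_symdiff inE addbF. Qed.

Lemma symdiffKl A B : symdiff A (symdiff A B) = B.
Proof. by rewrite -symdiffA symdiffv symdiffC symdiff0. Qed.

Lemma symdiffKr A B : symdiff (symdiff A B) B = A.
Proof. by rewrite symdiffA symdiffv symdiff0. Qed.

Lemma symdiff_eq0 A B : symdiff A B = set0 -> A = B.
Proof. by move=> AB0; rewrite -(symdiffKl A B) AB0 symdiff0. Qed.

Lemma symdiff_inj A : injective (symdiff A).
Proof. by move=> B B' eqB; rewrite -(symdiffKl A B) eqB symdiffKl. Qed.

End SymDiff.

(** * Hexagons of the lattice *)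

Definition pt0 : point := (0%R, 0%R).
Definition edge0 : edge := (pt0, false).
Definition has_end (p : point) (e : edge) := ((ends e).1 == p) || ((ends e).2 == p).
Definition alt_pattern := [:: true; false; true; false; true; false].
Definition even_edges h := [seq nth edge0 (hex_edges h) k | k <- [:: 0; 2; 4]]%N.

Section CellGeometry.
Implicit Types (h c d : point) (e : edge).

Lemma size_hex_edges h : size (hex_edges h) = 6. Proof. by case: h. Qed.
Lemma size_hex_verts h : size (hex_verts h) = 6. Proof. by case: h. Qed.

Lemma hex_edges_uniq h : uniq (hex_edges h).
Proof. case: h => x y /=; rewrite !inE !xpair_eqE /=; lia. Qed.

Lemma ends_neq e : (ends e).1 != (ends e).2.
Proof. case: e => [[a b] []]; rewrite /= xpair_eqE; lia. Qed.

Lemma hex_edge_ends h e : e \in hex_edges h ->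
  ((ends e).1 \in hex_verts h) && ((ends e).2 \in hex_verts h).
Proof.
case: h => x y; case: e => [[a b] []];
rewrite /= !inE !xpair_eqE /= ?andbT ?andbF ?orbF /=; lia.
Qed.

Lemma hex_vertex_index h p : p \in hex_verts h ->
  exists2 k, (k < 6)%N & p = nth pt0 (hex_verts h) k.
Proof.
move=> hp; exists (index p (hex_verts h)); last by rewrite nth_index.
by rewrite -(size_hex_verts h) index_mem.
Qed.

(* The vertex [k] of a hexagon lies on its edges [k] and [k - 1 mod 6] only. *)
Lemma count_hex_edges_at h (P : pred edge) k : (k < 6)%N ->
  count (fun e => P e && has_end (nth pt0 (hex_verts h) k) e) (hex_edges h)
  = (P (nth edge0 (hex_edges h) k) + P (nth edge0 (hex_edges h) ((k + 5) %% 6)))%N.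
Proof.
case: h => x y.
case: k => [|[|[|[|[|[|]]]]]] //= _;
rewrite /has_end /= !xpair_eqE;
case: (P _); case: (P _); case: (P _); case: (P _); case: (P _); case: (P _); simpl; lia.
Qed.

Lemma hex_edge_joins h k : (k < 5)%N ->
  let: e := nth edge0 (hex_edges h) k in
  let: p := nth pt0 (hex_verts h) k in let: q := nth pt0 (hex_verts h) k.+1 in
  (ends e == (p, q)) || (ends e == (q, p)).
Proof. case: h => x y; case: k => [|[|[|[|[|]]]]] //= _; rewrite !xpair_eqE /=; lia. Qed.

Lemma cell_eq_of_common_edges c d e1 e2 : is_cell c -> is_cell d -> e1 != e2 ->
  e1 \in hex_edges c -> e2 \in hex_edges c -> e1 \in hex_edges d -> e2 \in hex_edges d ->
  c = d.
Proof.
case: c => x y; case: d => x' y'; case: e1 => [[a b] []]; case: e2 => [[a' b'] []];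
rewrite /is_cell /= !inE !xpair_eqE /= ?andbT ?andbF ?orbF /= => hc hd ne h1 h2 h3 h4;
apply/eqP; rewrite xpair_eqE; lia.
Qed.

Lemma alt_pattern_deg (f : pred edge) h :
  let: b := map f (hex_edges h) in (b == alt_pattern) || (b == map negb alt_pattern) =
  all (fun k => f (nth edge0 (hex_edges h) k) +
                f (nth edge0 (hex_edges h) ((k + 5) %% 6)) == 1)%N (iota 0 6).
Proof.
case: h => x y /=.
by case: (f _); case: (f _); case: (f _); case: (f _); case: (f _); case: (f _).
Qed.

Lemma even_edges_pattern h : [seq e \in even_edges h | e <- hex_edges h] = alt_pattern.
Proof. case: h => x y; rewrite /= !inE !xpair_eqE /=; do 6 (congr (_ :: _); first lia). Qed.

End CellGeometry.

(** * The graph H and its alternating hexagons *)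

Section HexGraph.
Variable S : seq point.
Local Notation E := (EH S).
Local Notation V := (VH S).
Implicit Types (h : point) (A B M : {set E}).

Lemma mem_edgesH h e : h \in S -> e \in hex_edges h -> e \in edgesH S.
Proof. by move=> hS he; apply/flatten_mapP; exists h. Qed.

Lemma mem_vertsH h p : h \in S -> p \in hex_verts h -> p \in vertsH S.
Proof. by move=> hS hp; apply/flatten_mapP; exists h. Qed.

Lemma src_mem (x : E) : (ends (val x)).1 \in vertsH S.
Proof.
have /flatten_mapP[h hS hx] := ssvalP x.
by case/andP: (hex_edge_ends hx) => + _; apply: mem_vertsH.
Qed.

Lemma dst_mem (x : E) : (ends (val x)).2 \in vertsH S.
Proof.
have /flatten_mapP[h hS hx] := ssvalP x.
by case/andP: (hex_edge_ends hx) => _; apply: mem_vertsH.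
Qed.

Definition src (x : E) : V := SeqSub (src_mem x).
Definition dst (x : E) : V := SeqSub (dst_mem x).

Lemma incidentE (v : V) (x : E) : incident v x = (v == src x) || (v == dst x).
Proof. by rewrite /incident -!val_eqE /= ![_ == val v]eq_sym. Qed.

Lemma src_neq_dst x : src x != dst x.
Proof. by rewrite -val_eqE /= ends_neq. Qed.

Lemma incident_src x : incident (src x) x. Proof. by rewrite incidentE eqxx. Qed.
Lemma incident_dst x : incident (dst x) x. Proof. by rewrite incidentE eqxx orbT. Qed.

Definition edges_at (v : V) := [set x : E | incident v x].

Lemma hex_vertex_exists h k : h \in S -> (k < 6)%N ->
  exists v : V, val v = nth pt0 (hex_verts h) k.
Proof.
move=> hS hk; have hv : nth pt0 (hex_verts h) k \in vertsH S.
  by apply: (mem_vertsH hS); apply: mem_nth; rewrite size_hex_verts.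
by exists (SeqSub hv).
Qed.

Lemma inM_val A x : inM A (val x) = (x \in A).
Proof.
apply/existsP/idP => [[y /andP[yA /eqP/val_inj <-]] // | xA].
by exists x; rewrite xA eqxx.
Qed.

Lemma inM_out A e : e \notin edgesH S -> inM A e = false.
Proof. by move=> eS; apply/existsP => -[y /andP[_ /eqP ey]]; move: eS; rewrite -ey (ssvalP y). Qed.

Lemma inMI A B e : inM (A :&: B) e = inM A e && inM B e.
Proof.
case: (boolP (e \in edgesH S)) => [eS|eS]; last by rewrite !inM_out.
by rewrite -[e]/(val (SeqSub eS : E)) !inM_val inE.
Qed.

Lemma inMD A B e : inM (A :\: B) e = inM A e && ~~ inM B e.
Proof.
case: (boolP (e \in edgesH S)) => [eS|eS]; last by rewrite !inM_out.
by rewrite -[e]/(val (SeqSub eS : E)) !inM_val inE andbC.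
Qed.

Lemma inM_hexE h e : h \in S -> e \in hex_edges h -> inM (hexE S h) e.
Proof.
move=> hS he; have eS := mem_edgesH hS he.
by rewrite -[e]/(val (SeqSub eS : E)) inM_val inE.
Qed.

Lemma card_edges_of_seq (s : seq edge) (P : pred edge) : uniq s -> {subset s <= edgesH S} ->
  #|[set x : E | (val x \in s) && P (val x)]| = count P s.
Proof.
elim: s => [|e s IH] /=.
  by move=> _ _; apply/eqP; rewrite cards_eq0; apply/eqP/setP => y; rewrite !inE.
case/andP=> es us sub.
have eS : e \in edgesH S by apply: sub; rewrite inE eqxx.
have sub' : {subset s <= edgesH S} by move=> y ys; apply: sub; rewrite inE ys orbT.
case: (boolP (P e)) => Pe.
  have -> : [set y : E | (val y \in e :: s) && P (val y)] =
            (SeqSub eS : E) |: [set y : E | (val y \in s) && P (val y)].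
    apply/setP => y; rewrite !inE -val_eqE /=.
    by case: (eqVneq (val y) e) => [->|] //=; rewrite Pe.
  by rewrite cardsU1 IH // inE /= (negbTE es).
have -> : [set y : E | (val y \in e :: s) && P (val y)] =
          [set y : E | (val y \in s) && P (val y)].
  apply/setP => y; rewrite !inE.
  by case: (eqVneq (val y) e) => [->|] //=; rewrite (negbTE Pe) ?andbF.
by rewrite IH.
Qed.

Lemma card_hexE h : h \in S -> #|hexE S h| = 6.
Proof.
move=> hS; rewrite -(size_hex_edges h) -count_predT -card_edges_of_seq ?hex_edges_uniq //.
  by apply: eq_card => x; rewrite !inE andbT.
by move=> e; apply: mem_edgesH.
Qed.

Lemma hexE_neq0 h : h \in S -> exists x, x \in hexE S h.
Proof. by move=> hS; apply/set0Pn; rewrite -card_gt0 card_hexE. Qed.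

Lemma card_hexE_at A h (v : V) : h \in S ->
  #|A :&: hexE S h :&: edges_at v| =
  count (fun e => inM A e && has_end (val v) e) (hex_edges h).
Proof.
move=> hS; rewrite -card_edges_of_seq ?hex_edges_uniq //; last by move=> e; apply: mem_edgesH.
by apply: eq_card => x; rewrite !inE inM_val -andbA andbCA.
Qed.

Lemma hexE_ends h x : x \in hexE S h -> (src x \in hexV S h) && (dst x \in hexV S h).
Proof. by rewrite !inE => /hex_edge_ends. Qed.

Lemma hexE_incident h x v : x \in hexE S h -> incident v x -> v \in hexV S h.
Proof. by move=> /hexE_ends /andP[h1 h2]; rewrite incidentE => /orP[] /eqP ->. Qed.

Lemma pm_edges_at M v : perfect_matching M -> #|M :&: edges_at v| = 1.
Proof. by move=> /forallP /(_ v) /eqP <-; apply: eq_card => x; rewrite !inE. Qed.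

Lemma pm_edge_at M v : perfect_matching M -> exists m, M :&: edges_at v = [set m].
Proof. by move=> /(pm_edges_at v) /eqP /cards1P. Qed.

Lemma alternating_deg A h : h \in S ->
  alternating A h =
  [forall v, (v \in hexV S h) ==> (#|A :&: hexE S h :&: edges_at v| == 1)].
Proof.
move=> hS; rewrite /alternating alt_pattern_deg.
apply/allP/forallP => [alt v|deg k].
  apply/implyP; rewrite inE => /hex_vertex_index [k hk ev].
  by rewrite card_hexE_at // ev count_hex_edges_at //; apply: alt; rewrite mem_iota.
rewrite mem_iota add0n => /andP[_ hk].
have [v ev] := hex_vertex_exists hS hk.
have := deg v; rewrite inE ev mem_nth ?size_hex_verts //=.
by rewrite card_hexE_at // ev count_hex_edges_at.
Qed.

Lemma alternating_edges_at A h v : h \in S -> alternating A h -> v \in hexV S h ->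
  #|A :&: hexE S h :&: edges_at v| = 1.
Proof. by move=> hS; rewrite alternating_deg // => /forallP /(_ v) /implyP vh /vh /eqP. Qed.

Lemma alternating_eq_in A B h :
  {in hex_edges h, inM A =1 inM B} -> alternating A h = alternating B h.
Proof. by move=> /eq_in_map eqAB; rewrite /alternating eqAB. Qed.

Lemma alternating_setI A h : h \in S -> alternating (A :&: hexE S h) h = alternating A h.
Proof. by move=> hS; apply: alternating_eq_in => e he; rewrite inMI inM_hexE ?andbT. Qed.

Lemma alternating_setDl A h : h \in S -> alternating (hexE S h :\: A) h = alternating A h.
Proof.
move=> hS; rewrite /alternating.
have -> : map (inM (hexE S h :\: A)) (hex_edges h) = map negb (map (inM A) (hex_edges h)).
  by rewrite -map_comp; apply/eq_in_map => e he; rewrite inMD inM_hexE.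
case: h hS => x y _ /=.
by case: (inM A _); case: (inM A _); case: (inM A _);
   case: (inM A _); case: (inM A _); case: (inM A _).
Qed.

Lemma alternating_cases A B h : h \in S -> alternating A h -> alternating B h ->
  A :&: hexE S h = B :&: hexE S h \/ A :&: hexE S h = hexE S h :\: B.
Proof.
move=> hS altA altB.
have [sameAB|oppAB] : {in hex_edges h, inM A =1 inM B} \/
    {in hex_edges h, inM A =1 (fun e => ~~ inM B e)}.
- move: altA altB; rewrite /alternating => /orP[] /eqP eA /orP[] /eqP eB;
    [left | right | right | left]; apply/eq_in_map;
    by rewrite ?(map_comp negb (inM B)) eA eB.
- left; apply/setP => x; rewrite !inE.
  by case: (boolP (val x \in hex_edges h)) => hx; rewrite ?andbF // -!inM_val sameAB.
- right; apply/setP => x; rewrite !inE.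
  by case: (boolP (val x \in hex_edges h)) => hx; rewrite ?andbF ?andbT // -!inM_val oppAB.
Qed.

Lemma pm_alternating_edges_at M h v : h \in S -> perfect_matching M -> alternating M h ->
  v \in hexV S h -> M :&: edges_at v \subset hexE S h.
Proof.
move=> hS pmM altM vh.
have degh := alternating_edges_at hS altM vh.
have sub : M :&: hexE S h :&: edges_at v \subset M :&: edges_at v.
  by apply/subsetP => x; rewrite !inE => /andP[/andP[-> _] ->].
have /eqP <- : M :&: hexE S h :&: edges_at v == M :&: edges_at v.
  by rewrite eqEcard sub degh pm_edges_at.
by apply/subsetP => x; rewrite !inE => /andP[/andP[_ ->]].
Qed.

Lemma pm_alternating_edge M h v x : h \in S -> perfect_matching M -> alternating M h ->
  v \in hexV S h -> x \in M -> incident v x -> x \in hexE S h.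
Proof.
move=> hS pmM altM vh xM vx.
by apply: (subsetP (pm_alternating_edges_at hS pmM altM vh)); rewrite !inE xM.
Qed.

Lemma card_hexE_at_vertex h v : h \in S -> v \in hexV S h ->
  #|hexE S h :&: edges_at v| = 2.
Proof.
move=> hS; rewrite inE => /hex_vertex_index [k hk ev].
rewrite -{1}(setIid (hexE S h)) card_hexE_at // ev count_hex_edges_at // !inM_hexE //;
  by apply: mem_nth; rewrite size_hex_edges // ltn_mod.
Qed.

(* A vertex [v] of [h] lies on two edges of [h]; as [M] and [M] flipped along [h]
   both cover [v] once, exactly one of these two edges is in [M]. *)
Lemma alternating_of_flip M h : h \in S -> perfect_matching M ->
  perfect_matching (symdiff M (hexE S h)) -> alternating M h.
Proof.
move=> hS pmM pmMh; rewrite alternating_deg //; apply/forallP => v; apply/implyP => vh.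
set H := hexE S h; set Ev := edges_at v.
have [eqDH eqIH eqHM eqMH] : [/\ symdiff M H :&: Ev :\: H = M :&: Ev :\: H,
    symdiff M H :&: Ev :&: H = H :&: Ev :\: M,
    H :&: Ev :&: M = M :&: H :&: Ev & M :&: Ev :&: H = M :&: H :&: Ev].
  by split; apply/setP => x; rewrite !(in_setI, in_setD, in_symdiff);
    case: (x \in M); case: (x \in H); case: (x \in Ev).
have := pm_edges_at v pmM; have := pm_edges_at v pmMh; have := card_hexE_at_vertex hS vh.
rewrite -/H -/Ev -(cardsID H (M :&: Ev)) -(cardsID H (symdiff M H :&: Ev)).
rewrite -(cardsID M (H :&: Ev)) eqDH eqIH eqHM eqMH.
move=> ? ? ?; apply/eqP; lia.
Qed.

Hypothesis cellS : all is_cell S.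

Lemma hexE_meet_gt1 h h' : h \in S -> h' \in S ->
  (1 < #|hexE S h :&: hexE S h'|)%N -> h = h'.
Proof.
move=> hS h'S /card_gt1P [x [y [hx hy nxy]]].
move: hx hy; rewrite !inE => /andP[x1 x2] /andP[y1 y2].
by apply: (@cell_eq_of_common_edges _ _ (val x) (val y)) => //; apply: (allP cellS).
Qed.

Lemma hexE_inj h h' : h \in S -> h' \in S -> hexE S h = hexE S h' -> h = h'.
Proof. by move=> hS h'S eqh; apply: hexE_meet_gt1 => //; rewrite -eqh setIid card_hexE. Qed.

(* In a square of hexagon flips, opposite sides flip the same hexagon: [hexE h']
   meets [hexE h] and [hexE g] in at most one edge each, so at least four of its
   edges lie in [hexE g']. *)
Lemma hexE_square h h' g g' : h \in S -> h' \in S -> g \in S -> g' \in S ->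
  symdiff (hexE S h) (hexE S g) = symdiff (hexE S h') (hexE S g') ->
  h != h' -> g != h -> g = h'.
Proof.
move=> hS h'S gS g'S eqD nhh' ngh; apply/eqP/negPn/negP => ngh'.
have meet1 c c' : c \in S -> c' \in S -> c != c' -> (#|hexE S c' :&: hexE S c| <= 1)%N.
  by move=> cS c'S ncc'; rewrite leqNgt; apply: contra ncc' => /(hexE_meet_gt1 c'S cS) ->.
set A := hexE S h; set B := hexE S h'; set G := hexE S g; set G' := hexE S g'.
have sub : B :\: (A :|: G) \subset B :&: G'.
  apply/subsetP => x; rewrite !(in_setD, in_setU, in_setI) => /andP[/norP[xA xG] xB].
  have /setP/(_ x) := eqD; rewrite !in_symdiff (negbTE xA) (negbTE xG) xB /=.
  by case: (x \in G').
have eqG'B : g' = h'.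
  apply/eqP/negPn/negP => ng'h'.
  have := subset_leq_card sub; have := meet1 _ _ g'S h'S ng'h'.
  have := meet1 _ _ hS h'S nhh'; have := meet1 _ _ gS h'S ngh'.
  have := cardsID (A :|: G) B; have := cardsUI (B :&: A) (B :&: G).
  rewrite -setIUr card_hexE // -/A -/B -/G -/G'; lia.
have /symdiff_eq0 eqAG : symdiff A G = set0 by rewrite eqD /G' eqG'B symdiffv.
by move: ngh; rewrite (hexE_inj gS hS (esym eqAG)) eqxx.
Qed.

End HexGraph.

Section Components.
Variables (S : seq point) (C : {set EH S}).
Local Notation V := (VH S).

Lemma crel_sym : symmetric (crel C).
Proof.
by move=> u w; apply/existsP/existsP => -[x /andP[xC uw]]; exists x; rewrite xC orbC.
Qed.

Lemma connect_crel_sym : connect_sym (crel C).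
Proof. exact: sym_connect_sym crel_sym. Qed.

Lemma crel_incident u w : crel C u w -> exists2 x, x \in C & incident u x && incident w x.
Proof.
case/existsP=> x /andP[xC uw]; exists x => //.
by rewrite /incident; case/orP: uw => /eqP ->; rewrite /= !eqxx ?orbT.
Qed.

Lemma connect_incident u w x : x \in C -> incident u x -> incident w x ->
  connect (crel C) u w.
Proof.
have crel_x : x \in C -> crel C (src x) (dst x).
  by move=> xC; apply/existsP; exists x; rewrite xC /= -surjective_pairing eqxx.
move=> xC; rewrite !incidentE => /orP[] /eqP -> /orP[] /eqP ->; rewrite ?connect0 //.
  exact/connect1/crel_x.
by rewrite connect_crel_sym; apply/connect1/crel_x.
Qed.

Lemma mem_comp v : v \in comp C v.
Proof. by rewrite inE connect0. Qed.

Lemma comp_sub_closed (A : {set V}) v :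
  (forall u w, u \in A -> crel C u w -> w \in A) -> v \in A -> comp C v \subset A.
Proof.
move=> clA vA; apply/subsetP => u; rewrite inE => vu.
suff closedA : closed (crel C) A by rewrite -(closed_connect closedA vu).
move=> x y xy; apply/idP/idP => [xA|yA]; first exact: clA xy.
by apply: clA yA _; rewrite crel_sym.
Qed.

Lemma comp_eq v u : u \in comp C v -> comp C u = comp C v.
Proof.
rewrite inE => vu; apply/setP => w; rewrite !inE; apply/idP/idP => [uw|vw].
  exact: connect_trans vu uw.
by apply: connect_trans vw; rewrite connect_crel_sym.
Qed.

Lemma mem_compE v x : x \in C -> incident v x -> x \in compE C v.
Proof. by move=> xC vx; rewrite inE xC /=; apply/existsP; exists v; rewrite mem_comp. Qed.

Lemma compEP v x : x \in compE C v -> [/\ x \in C, src x \in comp C v & dst x \in comp C v].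
Proof.
rewrite inE => /andP[xC /existsP[u /andP[uc ux]]].
rewrite inE in uc; split => //; rewrite inE; apply: connect_trans uc _;
  by apply: connect_incident xC ux _; rewrite ?incident_src ?incident_dst.
Qed.

Lemma connect_hexV h u u' : h \in S -> hexE S h \subset C ->
  u \in hexV S h -> u' \in hexV S h -> connect (crel C) u u'.
Proof.
move=> hS hC uh u'h.
pose vk k : V := insubd u (nth pt0 (hex_verts h) k).
have vkE k : (k < 6)%N -> val (vk k) = nth pt0 (hex_verts h) k.
  move=> hk; rewrite val_insubd.
  by rewrite (mem_vertsH hS (mem_nth _ _)) // size_hex_verts.
have vk_step k : (k < 5)%N -> crel C (vk k) (vk k.+1).
  move=> hk; have hk6 : (k < 6)%N by apply: ltn_trans hk _.
  have xS : nth edge0 (hex_edges h) k \in edgesH S.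
    by apply: (mem_edgesH hS); apply: mem_nth; rewrite size_hex_edges.
  apply/existsP; exists (SeqSub xS).
  rewrite (subsetP hC) /= ?inE ?mem_nth ?size_hex_edges // !vkE //.
  exact: hex_edge_joins.
have vk_conn k : (k < 6)%N -> connect (crel C) (vk 0%N) (vk k).
  elim: k => [|k IHk] hk; first exact: connect0.
  by apply: connect_trans (IHk (ltnW hk)) _; apply/connect1/vk_step.
have vkP w : w \in hexV S h -> exists2 k, (k < 6)%N & w = vk k.
  by rewrite inE => /hex_vertex_index [k hk ek]; exists k => //; apply: val_inj; rewrite vkE.
have [k hk ->] := vkP u uh; have [k' hk' ->] := vkP u' u'h.
by apply: connect_trans (vk_conn k' hk'); rewrite connect_crel_sym; apply: vk_conn.
Qed.

End Components.

(** * The cube of a resonant set *)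

Definition resonant (S : seq point) n (hh : 'I_n -> point) (M : {set EH S}) : Prop :=
  [/\ forall i, hh i \in S,
      forall i j, i != j -> [disjoint hexV S (hh i) & hexV S (hh j)],
      perfect_matching M & forall i, alternating M (hh i)].

Lemma fCP S (C X : {set EH S}) :
  reflect [/\ perfect_matching X, forall h, hex_comp C h -> alternating X h &
               forall e, edge_comp C e -> e \in X]
          (X \in fC C).
Proof.
rewrite !inE; apply: (iffP and3P) => [[pmX /forallP altX /forallP edgeX]|[pmX altX edgeX]].
  split=> // [h hC|e]; last exact/implyP/edgeX.
  by have /implyP := altX (SeqSub (proj1 (andP hC))); apply.
split=> //; first by apply/forallP => h; apply/implyP; apply: altX.
by apply/forallP => e; apply/implyP; apply: edgeX.
Qed.

Section ResonantCube.
Variable S : seq point.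
Hypothesis cellS : all is_cell S.
Local Notation E := (EH S).
Local Notation V := (VH S).
Variables (n : nat) (hh : 'I_n -> point) (M : {set E}).
Hypotheses (hhS : forall i, hh i \in S)
  (hh_disj : forall i j, i != j -> [disjoint hexV S (hh i) & hexV S (hh j)])
  (pmM : perfect_matching M) (altM : forall i, alternating M (hh i)).
Local Notation H i := (hexE S (hh i)).
Implicit Types (a b : {ffun 'I_n -> bool}) (v : V) (x : E).

Definition resonantE := \bigcup_i hexE S (hh i).
Definition resonantV := \bigcup_i hexV S (hh i).
Definition flipped a := \bigcup_(i | a i) hexE S (hh i).
Definition flip a := symdiff M (flipped a).
Definition resonant_cover := M :|: resonantE.

Lemma hexV_disj_eq i j v : v \in hexV S (hh i) -> v \in hexV S (hh j) -> i = j.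
Proof. by move=> vi vj; apply/eqP/negPn/negP => /hh_disj /disjointFr /(_ vi); rewrite vj. Qed.

Lemma hexE_incident_eq i j v x : v \in hexV S (hh i) -> incident v x -> x \in H j -> j = i.
Proof. by move=> vi vx xj; apply: (hexV_disj_eq (v := v)) => //; apply: hexE_incident xj vx. Qed.

Lemma hexE_disj_eq i j x : x \in H i -> x \in H j -> i = j.
Proof.
move=> xi xj; have /andP[sj _] := hexE_ends xj.
exact: (hexE_incident_eq sj (incident_src x) xi).
Qed.

Lemma hh_inj : injective hh.
Proof.
move=> i j eqij; have [x xi] := hexE_neq0 (hhS i).
by apply: (hexE_disj_eq (j := j) xi); rewrite -eqij.
Qed.

Lemma mem_bigcup_hexE (P : pred 'I_n) i x :
  x \in H i -> (x \in \bigcup_(j | P j) H j) = P i.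
Proof.
move=> xi; apply/bigcupP/idP => [[j Pj xj]|Pi]; last by exists i.
by rewrite (hexE_disj_eq xi xj).
Qed.

Lemma resonantEP x : reflect (exists i, x \in H i) (x \in resonantE).
Proof. by apply: (iffP bigcupP) => [[i _ xi]|[i xi]]; exists i. Qed.

Lemma resonantVP v : reflect (exists i, v \in hexV S (hh i)) (v \in resonantV).
Proof. by apply: (iffP bigcupP) => [[i _ vi]|[i vi]]; exists i. Qed.

Lemma incident_resonantE v x : x \in resonantE -> incident v x -> v \in resonantV.
Proof. by case/resonantEP => i xi vx; apply/resonantVP; exists i; apply: hexE_incident xi vx. Qed.

Lemma matched_edge_hexE i v x : v \in hexV S (hh i) -> x \in M -> incident v x -> x \in H i.
Proof. exact: pm_alternating_edge (hhS i) pmM (altM i). Qed.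

Lemma in_flip_hexE a i x : x \in H i -> (x \in flip a) = (x \in M) (+) a i.
Proof. by move=> xi; rewrite in_symdiff (mem_bigcup_hexE a xi). Qed.

Lemma in_flip_out a x : x \notin resonantE -> (x \in flip a) = (x \in M).
Proof.
move=> xE; rewrite in_symdiff; case: bigcupP => [[i _ xi]|]; last by rewrite addbF.
by case/resonantEP: xE; exists i.
Qed.

Lemma flip_eq (X : {set E}) a :
  (forall i x, x \in H i -> (x \in X) = (x \in M) (+) a i) ->
  (forall x, x \notin resonantE -> (x \in X) = (x \in M)) -> X = flip a.
Proof.
move=> onH offH; apply/setP => x.
case: (boolP (x \in resonantE)) => [/resonantEP [i xi]|xE].
  by rewrite (onH _ _ xi) (in_flip_hexE a xi).
by rewrite offH // in_flip_out.
Qed.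

Lemma flip0 : flip [ffun=> false] = M.
Proof. by rewrite /flip /flipped big_pred0 ?symdiff0 // => i; rewrite ffunE. Qed.

Lemma flip_toggle a b i : (forall j, b j = a j (+) (j == i)) ->
  flip b = symdiff (flip a) (H i).
Proof.
move=> bE; apply/esym/flip_eq => [j x xj | x xE].
  rewrite in_symdiff (in_flip_hexE a xj) bE addbA.
  by congr (_ (+) _); apply/idP/eqP => [xi | <-] //; apply: hexE_disj_eq xj xi.
rewrite in_symdiff in_flip_out //; case: (boolP (x \in H i)) => [xi|_]; last exact: addbF.
by case/resonantEP: xE; exists i.
Qed.

Lemma alternating_flip a i : alternating (flip a) (hh i).
Proof.
have flipH : flip a :&: H i = if a i then H i :\: M else M :&: H i.
  apply/setP => x; rewrite in_setI; case: (boolP (x \in H i)) => xi; last first.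
    by case: (a i); rewrite !(in_setI, in_setD) (negbTE xi) ?andbF.
  by rewrite (in_flip_hexE a xi); case: (a i); rewrite !(in_setI, in_setD) xi ?andbT ?addbT ?addbF.
rewrite -alternating_setI // flipH; case: (a i); last by rewrite alternating_setI.
by rewrite alternating_setDl.
Qed.

Lemma pm_flip a : perfect_matching (flip a).
Proof.
apply/forallP => v; apply/eqP.
have -> : #|[set x in flip a | incident v x]| = #|flip a :&: edges_at v|.
  by apply: eq_card => x; rewrite !inE.
case: (boolP (v \in resonantV)) => [/resonantVP [i vi]|vV].
  have -> : flip a :&: edges_at v = flip a :&: H i :&: edges_at v.
    apply/setP => x; rewrite !in_setI [x \in edges_at v]inE.
    case: (boolP (incident v x)) => vx; rewrite ?andbF ?andbT //.
    case: (boolP (x \in flip a)) => xa //=; apply/esym.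
    case: (boolP (x \in resonantE)) => [/resonantEP [j xj]|xE].
      by rewrite -(hexE_incident_eq vi vx xj).
    by move: xa; rewrite in_flip_out // => xM; apply: matched_edge_hexE vi xM vx.
  exact: alternating_edges_at (hhS i) (alternating_flip a i) vi.
have -> : flip a :&: edges_at v = M :&: edges_at v.
  apply/setP => x; rewrite !in_setI [x \in edges_at v]inE.
  case: (boolP (incident v x)) => vx; rewrite ?andbF ?andbT //.
  rewrite in_flip_out //; apply: (contra _ vV) => xE; exact: incident_resonantE xE vx.
exact: pm_edges_at.
Qed.

Lemma flip_inj : injective flip.
Proof.
move=> a b eqab; apply/ffunP => i; have [x xi] := hexE_neq0 (hhS i).
by have := in_flip_hexE a xi; rewrite eqab (in_flip_hexE b xi) => /addbI.
Qed.

Lemma symdiff_flip a b : symdiff (flip a) (flip b) = \bigcup_(i | a i != b i) H i.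
Proof.
apply/setP => x; rewrite in_symdiff.
case: (boolP (x \in resonantE)) => [/resonantEP [i xi]|xE].
  rewrite !(in_flip_hexE _ xi) (mem_bigcup_hexE _ xi).
  by case: (x \in M); case: (a i); case: (b i).
rewrite !in_flip_out // addbb; apply/esym/bigcupP => -[i _ xi].
by case/resonantEP: xE; exists i.
Qed.

Lemma radj_flip a b : radj (flip a) (flip b) = (hamming a b == 1).
Proof.
rewrite /radj -/(symdiff (flip a) (flip b)) symdiff_flip.
apply/hasP/cards1P => [[h hS /eqP eqh]|[i0 eqi0]].
  have [x xh] := hexE_neq0 hS.
  have [i0 abi0 xi0] : exists2 i0, a i0 != b i0 & x \in H i0 by apply/bigcupP; rewrite eqh.
  have hhE j : a j != b j -> hh j = h.
    move=> abj; apply: (hexE_meet_gt1 cellS (hhS j) hS).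
    have /setIidPl -> : H j \subset hexE S h by rewrite -eqh; apply: bigcup_sup.
    by rewrite card_hexE.
  exists i0; apply/setP => j; rewrite !inE; apply/idP/eqP => [abj|->] //.
  by apply: hh_inj; rewrite (hhE j abj) (hhE i0).
exists (hh i0) => //; apply/eqP/setP => x.
have abE j : (a j != b j) = (j == i0) by rewrite -[j == i0]in_set1 -eqi0 inE.
case: (boolP (x \in resonantE)) => [/resonantEP [i xi]|xE].
  rewrite (mem_bigcup_hexE _ xi) abE.
  by apply/eqP/idP => [<- // | xi0]; apply: hexE_disj_eq xi xi0.
apply/bigcupP/idP => [[i _ xi] | xi0]; case/resonantEP: xE; by [exists i | exists i0].
Qed.

Lemma cover_edge_hexE i v x : v \in hexV S (hh i) -> x \in resonant_cover -> incident v x ->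
  x \in H i.
Proof.
move=> vi; rewrite in_setU => /orP[xM|/resonantEP [j xj]] vx.
  exact: matched_edge_hexE vi xM vx.
by rewrite -(hexE_incident_eq vi vx xj).
Qed.

Lemma hexE_sub_cover i : H i \subset resonant_cover.
Proof. by apply/subsetP => x xi; rewrite in_setU; apply/orP; right; apply/resonantEP; exists i. Qed.

Lemma comp_cover_hexV i v : v \in hexV S (hh i) -> comp resonant_cover v = hexV S (hh i).
Proof.
move=> vi; apply/eqP; rewrite eqEsubset; apply/andP; split.
  apply: comp_sub_closed vi => u w ui /crel_incident [x xC /andP[ux wx]].
  exact: hexE_incident (cover_edge_hexE ui xC ux) wx.
apply/subsetP => u ui; rewrite inE; exact: connect_hexV (hhS i) (hexE_sub_cover i) vi ui.
Qed.

Lemma compE_cover_hexV i v : v \in hexV S (hh i) -> compE resonant_cover v = H i.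
Proof.
move=> vi; apply/setP => x; apply/idP/idP => [xC|xi].
  have [xC' sx _] := compEP xC; rewrite (comp_cover_hexV vi) in sx.
  exact: cover_edge_hexE sx xC' (incident_src x).
have /andP[sx _] := hexE_ends xi.
rewrite inE (subsetP (hexE_sub_cover i) x xi) /=; apply/existsP; exists (src x).
by rewrite (comp_cover_hexV vi) sx incident_src.
Qed.

Lemma cover_edges_at_out u : u \notin resonantV ->
  resonant_cover :&: edges_at u = M :&: edges_at u.
Proof.
move=> uV; apply/setP => x; rewrite !in_setI in_setU [x \in edges_at u]inE.
case: (boolP (incident u x)) => ux; rewrite ?andbF ?andbT //.
case: (boolP (x \in resonantE)) => [xE|]; last by rewrite orbF.
by case/negP: uV; apply: incident_resonantE xE ux.
Qed.

Lemma comp_cover_out v m : v \notin resonantV -> M :&: edges_at v = [set m] ->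
  comp resonant_cover v = [set src m; dst m] /\ compE resonant_cover v = [set m].
Proof.
move=> vV eqm.
have /setIP [mM vm] : m \in M :&: edges_at v by rewrite eqm set11.
rewrite inE in vm.
have m_end u : incident u m = (u \in [set src m; dst m]) by rewrite incidentE !inE.
have coverE u : incident u m -> resonant_cover :&: edges_at u = [set m].
  move=> um; rewrite cover_edges_at_out; last first.
    apply: contra vV => /resonantVP [j uj]; apply/resonantVP; exists j.
    exact: hexE_incident (matched_edge_hexE uj mM um) vm.
  apply/eqP; rewrite eq_sym eqEcard cards1 pm_edges_at // andbT.
  by rewrite sub1set in_setI mM inE.
have edge_m u x : incident u m -> x \in resonant_cover -> incident u x -> x = m.
  by move=> um xC ux; apply/set1P; rewrite -(coverE u um) in_setI xC inE.
have mC : m \in resonant_cover by rewrite in_setU mM.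
have ecomp : comp resonant_cover v = [set src m; dst m].
  apply/eqP; rewrite eqEsubset; apply/andP; split.
    apply: comp_sub_closed; last by rewrite -m_end.
    move=> u w; rewrite -!m_end => um /crel_incident [x xC /andP[ux wx]].
    by rewrite -(edge_m u x).
  apply/subsetP => u; rewrite -m_end inE; exact: connect_incident mC vm.
split => //; apply/setP => x; rewrite in_set1; apply/idP/eqP => [xC|->]; last exact: mem_compE.
have [xC' sx _] := compEP xC; rewrite ecomp -m_end in sx.
exact: edge_m sx xC' (incident_src x).
Qed.

Lemma clar_cover_resonant : clar_cover resonant_cover.
Proof.
apply/forallP => v; case: (boolP (v \in resonantV)) => [/resonantVP [i vi]|vV].
  apply/orP; left; apply/existsP; exists (SeqSub (hhS i)) => /=.
  by rewrite (comp_cover_hexV vi) (compE_cover_hexV vi) !eqxx.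
have [m eqm] := pm_edge_at v pmM; have [-> ->] := comp_cover_out vV eqm.
by rewrite cards2 src_neq_dst cards1 orbT.
Qed.

Lemma hex_comp_cover h : hex_comp resonant_cover h -> exists i, h = hh i.
Proof.
case/andP=> hS /existsP [v /andP[/eqP compv /eqP compEv]].
case: (boolP (v \in resonantV)) => [/resonantVP [i vi]|vV].
  by exists i; apply: (hexE_inj cellS hS (hhS i)); rewrite -compEv (compE_cover_hexV vi).
have [m eqm] := pm_edge_at v pmM; have [_ compEm] := comp_cover_out vV eqm.
by have := card_hexE hS; rewrite -compEv compEm cards1.
Qed.

Lemma hex_comp_cover_hh i : hex_comp resonant_cover (hh i).
Proof.
rewrite /hex_comp hhS /=; have [v ev] := hex_vertex_exists (hhS i) (isT : (0 < 6)%N).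
have vi : v \in hexV S (hh i) by rewrite inE ev mem_nth ?size_hex_verts.
by apply/existsP; exists v; rewrite (comp_cover_hexV vi) (compE_cover_hexV vi) !eqxx.
Qed.

Lemma edge_comp_cover e : edge_comp resonant_cover e = (e \in M) && (e \notin resonantE).
Proof.
apply/existsP/andP => [[v /andP[_ /eqP compEv]] | [eM eE]].
  case: (boolP (v \in resonantV)) => [/resonantVP [i vi]|vV].
    by have := card_hexE (hhS i); rewrite -(compE_cover_hexV vi) compEv cards1.
  have [m eqm] := pm_edge_at v pmM; have [_] := comp_cover_out vV eqm.
  rewrite compEv => /set1_inj ->.
  have /setIP [mM] : m \in M :&: edges_at v by rewrite eqm set11.
  rewrite inE => vm; split=> //; apply: contra vV => mE; exact: incident_resonantE mE vm.
have eV : src e \notin resonantV.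
  apply: contra eE => /resonantVP [i ei]; apply/resonantEP; exists i.
  exact: matched_edge_hexE ei eM (incident_src e).
have [m eqm] := pm_edge_at (src e) pmM.
have em : e = m by apply/set1P; rewrite -eqm in_setI eM inE incident_src.
have [compe compEe] := comp_cover_out eV eqm.
by exists (src e); rewrite compe compEe cards2 src_neq_dst em !eqxx.
Qed.

Lemma fC_cover_out X x : X \in fC resonant_cover -> x \notin resonantE ->
  (x \in X) = (x \in M).
Proof.
case/fCP => pmX altX edgeX xE.
have altXi i : alternating X (hh i) by apply/altX/hex_comp_cover_hh.
have edgeXM e : e \in M -> e \notin resonantE -> e \in X.
  by move=> eM eE; apply: edgeX; rewrite edge_comp_cover eM.
apply/idP/idP => [xX|xM]; last exact: edgeXM.
apply/negPn/negP => xM.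
have sV : src x \notin resonantV.
  apply: contra xE => /resonantVP [i si]; apply/resonantEP; exists i.
  exact: pm_alternating_edge (hhS i) pmX (altXi i) si xX (incident_src x).
have [m eqm] := pm_edge_at (src x) pmM.
have /setIP [mM] : m \in M :&: edges_at (src x) by rewrite eqm set11.
rewrite inE => sm.
have mE : m \notin resonantE by apply: contra sV => mE; exact: incident_resonantE mE sm.
have [y eqy] := pm_edge_at (src x) pmX.
have xy : x = y by apply/set1P; rewrite -eqy in_setI xX inE incident_src.
have my : m = y by apply/set1P; rewrite -eqy in_setI (edgeXM m mM mE) inE.
by move: xM; rewrite xy -my mM.
Qed.

Lemma fC_cover : fC resonant_cover = [set flip a | a : {ffun 'I_n -> bool}].
Proof.
apply/setP => X; apply/idP/imsetP => [XC | [a _ ->]]; last first.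
  apply/fCP; split; first exact: pm_flip.
    by move=> h /hex_comp_cover [i ->]; apply: alternating_flip.
  by move=> e; rewrite edge_comp_cover => /andP[eM eE]; rewrite in_flip_out.
have [_ altX _] := fCP _ _ XC.
exists [ffun i => X :&: H i != M :&: H i] => //.
apply: flip_eq => [i x xi | x xE]; last exact: fC_cover_out.
rewrite ffunE.
have [eqXM|eqXHM] := alternating_cases (hhS i) (altX _ (hex_comp_cover_hh i)) (altM i).
  by rewrite eqXM eqxx addbF; have /setP/(_ x) := eqXM; rewrite !in_setI xi !andbT.
have -> : (X :&: H i != M :&: H i) = true.
  apply/negP => /eqP eqXM; have [y yi] := hexE_neq0 (hhS i).
  by have /setP/(_ y) := eqXM; rewrite eqXHM !(in_setI, in_setD) yi; case: (y \in M).
by have /setP/(_ x) := eqXHM; rewrite in_setI in_setD xi !andbT addbT.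
Qed.

Lemma cube_sub_fC_cover : cube_sub (fC resonant_cover).
Proof.
split; first by apply/subsetP => X /fCP [pmX _ _]; rewrite inE.
by exists n, flip; split; [exact: flip_inj | exact: fC_cover | exact: radj_flip].
Qed.

Lemma bigcup_fC_cover : \bigcup_(X in fC resonant_cover) X = resonant_cover.
Proof.
apply/setP => x; rewrite fC_cover /resonant_cover in_setU.
apply/bigcupP/idP => [[_ /imsetP [a _ ->] xa] | xC].
  case: (boolP (x \in resonantE)) => [_ | xE]; first by rewrite orbT.
  by rewrite -(in_flip_out a xE) xa.
case: (boolP (x \in resonantE)) => [/resonantEP [i xi] | xE].
  exists (flip [ffun j => (j == i) && (x \notin M)]); first by apply/imsetP; eexists.
  by rewrite (in_flip_hexE _ xi) ffunE eqxx; case: (x \in M).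
exists M; first by apply/imsetP; exists [ffun=> false]; rewrite ?flip0.
by move: xC; rewrite (negbTE xE) orbF.
Qed.

End ResonantCube.

(** * Clar covers and induced cubes come from resonant sets *)

Section ClarCoverResonant.
Variable S : seq point.
Hypothesis cellS : all is_cell S.
Local Notation E := (EH S).
Variable C : {set E}.
Hypothesis clarC : clar_cover C.

Lemma hex_comp_at h v : hex_comp C h -> v \in hexV S h ->
  comp C v = hexV S h /\ compE C v = hexE S h.
Proof.
case/andP=> hS /existsP[w /andP[/eqP compw /eqP compEw]] vh.
have eqvw : comp C v = comp C w by apply: comp_eq; rewrite compw.
by rewrite /compE eqvw.
Qed.

Definition hex_comps := [seq h <- undup S | hex_comp C h].
Definition comp_hex (i : 'I_(size hex_comps)) := nth pt0 hex_comps i.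
Local Notation hh := comp_hex.
Local Notation H i := (hexE S (hh i)).

Lemma comp_hex_comp i : hex_comp C (hh i).
Proof. by have := mem_nth pt0 (ltn_ord i); rewrite mem_filter => /andP[]. Qed.

Lemma comp_hexS i : hh i \in S.
Proof. by case/andP: (comp_hex_comp i). Qed.

Lemma comp_hex_disj i j : i != j -> [disjoint hexV S (hh i) & hexV S (hh j)].
Proof.
move=> nij; rewrite -setI_eq0; apply/set0Pn => -[v /setIP [vi vj]]; case/negP: nij.
have [_ compEi] := hex_comp_at (comp_hex_comp i) vi.
have [_ compEj] := hex_comp_at (comp_hex_comp j) vj.
have /eqP := hexE_inj cellS (comp_hexS i) (comp_hexS j) (etrans (esym compEi) compEj).
by rewrite nth_uniq ?filter_uniq ?undup_uniq.
Qed.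

Definition even_hexE h := [set x : E | val x \in even_edges h].
Definition clar_matching := (C :\: resonantE S hh) :|: \bigcup_i even_hexE (hh i).

Lemma even_hexE_sub h : even_hexE h \subset hexE S h.
Proof.
apply/subsetP => x; rewrite !inE /even_edges /= => /or3P[] /eqP ->;
  by apply: mem_nth; rewrite size_hex_edges.
Qed.

Lemma alternating_even_hexE h : h \in S -> alternating (even_hexE h) h.
Proof.
move=> hS; rewrite /alternating.
have -> : map (inM (even_hexE h)) (hex_edges h) = [seq e \in even_edges h | e <- hex_edges h].
  apply/eq_in_map => e he; have eS := mem_edgesH hS he.
  by rewrite -[e]/(val (SeqSub eS : E)) inM_val inE.
by rewrite even_edges_pattern eqxx.
Qed.

Lemma clar_matching_hexE i : clar_matching :&: H i = even_hexE (hh i).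
Proof.
apply/setP => x; rewrite in_setI.
case: (boolP (x \in H i)) => xi; last first.
  by rewrite andbF; apply/esym; apply: contraNF xi; apply/subsetP/even_hexE_sub.
rewrite andbT in_setU in_setD.
have -> : x \in resonantE S hh by apply/bigcupP; exists i.
apply/bigcupP/idP => [[j _ xj]|xe]; last by exists i.
have xHj := subsetP (even_hexE_sub _) x xj.
by rewrite (hexE_disj_eq comp_hex_disj xi xHj).
Qed.

Lemma alternating_clar_matching i : alternating clar_matching (hh i).
Proof.
by rewrite -alternating_setI ?comp_hexS // clar_matching_hexE alternating_even_hexE ?comp_hexS.
Qed.

Lemma resonantE_sub : resonantE S hh \subset C.
Proof.
apply/subsetP => x /bigcupP [i _ xi]; have /andP[si _] := hexE_ends xi.
have [_ compEs] := hex_comp_at (comp_hex_comp i) si.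
by have [] := compEP (_ : x \in compE C (src x)); rewrite ?compEs.
Qed.

Lemma edge_comp_out v : v \notin resonantV S hh ->
  exists2 e, compE C v = [set e] & incident v e.
Proof.
move=> vV; have := forallP clarC v => /orP[/existsP [h /andP[/eqP compv /eqP compEv]]|].
  have hC : hex_comp C (val h).
    by rewrite /hex_comp (ssvalP h) /=; apply/existsP; exists v; rewrite compv compEv !eqxx.
  have hcomps : val h \in hex_comps by rewrite mem_filter hC mem_undup (ssvalP h).
  have ih : (index (val h) hex_comps < size hex_comps)%N by rewrite index_mem.
  case/negP: vV; apply/bigcupP; exists (Ordinal ih) => //.
  by rewrite /comp_hex /= nth_index // -compv mem_comp.
case/andP=> card2 /cards1P [e compEe]; exists e => //.
have eC : e \in compE C v by rewrite compEe set11.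
have [_ se de] := compEP eC.
have sub : [set src e; dst e] \subset comp C v by apply/subsetP => u /set2P[]->.
have /eqP eqcomp : [set src e; dst e] == comp C v.
  by rewrite eqEcard sub (eqP card2) cards2 src_neq_dst.
have := mem_comp C v; rewrite -eqcomp incidentE.
by case/set2P => ->; rewrite eqxx ?orbT.
Qed.

Lemma clar_matching_edge_hexE i v x : v \in hexV S (hh i) -> x \in clar_matching ->
  incident v x -> x \in H i.
Proof.
move=> vi; rewrite in_setU in_setD => /orP[/andP[xE xC]|/bigcupP [j _ xj]] vx.
  have [_ compEv] := hex_comp_at (comp_hex_comp i) vi.
  by move: (mem_compE xC vx); rewrite compEv.
have xHj := subsetP (even_hexE_sub _) x xj.
by rewrite -(hexE_incident_eq comp_hex_disj vi vx xHj).
Qed.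

Lemma pm_clar_matching : perfect_matching clar_matching.
Proof.
apply/forallP => v; apply/eqP.
have -> : #|[set x in clar_matching | incident v x]| = #|clar_matching :&: edges_at v|.
  by apply: eq_card => x; rewrite !inE.
case: (boolP (v \in resonantV S hh)) => [/bigcupP [i _ vi]|vV].
  have -> : clar_matching :&: edges_at v = clar_matching :&: H i :&: edges_at v.
    apply/setP => x; rewrite !in_setI [x \in edges_at v]inE.
    case: (boolP (incident v x)) => vx; rewrite ?andbF ?andbT //.
    by case: (boolP (x \in clar_matching)) => //= xM; rewrite (clar_matching_edge_hexE vi xM vx).
  exact: alternating_edges_at (comp_hexS i) (alternating_clar_matching i) vi.
have [e compEv ve] := edge_comp_out vV.
have [eC _ _] : [/\ e \in C, src e \in comp C v & dst e \in comp C v].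
  by apply: compEP; rewrite compEv set11.
have eE : e \notin resonantE S hh.
  by apply: contra vV => /bigcupP [j _ ej]; apply/bigcupP; exists j => //;
    apply: hexE_incident ej ve.
suff -> : clar_matching :&: edges_at v = [set e] by rewrite cards1.
apply/setP => x; rewrite in_setI [x \in edges_at v]inE in_set1.
apply/idP/idP => [/andP[xM vx]|/eqP ->]; last by rewrite ve in_setU in_setD eE eC.
move: xM; rewrite in_setU in_setD => /orP[/andP[_ xC]|/bigcupP [j _ xj]].
  by rewrite -in_set1 -compEv mem_compE.
case/negP: vV; apply/bigcupP; exists j => //.
exact: hexE_incident (subsetP (even_hexE_sub _) x xj) vx.
Qed.

Lemma clar_cover_eq : C = resonant_cover hh clar_matching.
Proof.
apply/setP => x; rewrite /resonant_cover /clar_matching !in_setU in_setD.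
case: (boolP (x \in resonantE S hh)) => xE; rewrite ?orbT ?andbT /=.
  by rewrite (subsetP resonantE_sub x xE).
apply/idP/idP => [-> // | ]; rewrite orbF => /orP[// | /bigcupP [j _ xj]].
by case/negP: xE; apply/bigcupP; exists j => //; apply: (subsetP (even_hexE_sub _)).
Qed.

End ClarCoverResonant.

Lemma clar_cover_resonant_cover S (cellS : all is_cell S) (C : {set EH S}) :
  clar_cover C -> exists n (hh : 'I_n -> point) (M : {set EH S}),
  resonant hh M /\ C = resonant_cover hh M.
Proof.
move=> clarC; exists (size (hex_comps C)), (comp_hex (C := C)), (clar_matching C).
split; last exact: clar_cover_eq.
split; [exact: comp_hexS | exact: comp_hex_disj | exact: pm_clar_matching |].
exact: alternating_clar_matching.
Qed.

Section CubeResonant.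
Variable S : seq point.
Hypothesis cellS : all is_cell S.
Local Notation E := (EH S).
Variables (X : {set {set E}}) (n : nat) (phi : {ffun 'I_n -> bool} -> {set E}).
Hypotheses (X_pm : X \subset pm_set S) (phi_inj : injective phi)
  (XE : X = [set phi a | a : {ffun 'I_n -> bool}])
  (radj_phi : forall a b, radj (phi a) (phi b) = (hamming a b == 1)).
Implicit Types (a b : {ffun 'I_n -> bool}) (i j : 'I_n).

Definition unit_vec i : {ffun 'I_n -> bool} := [ffun k => k == i].
Definition drop_coord a i : {ffun 'I_n -> bool} := [ffun k => a k && (k != i)].
Local Notation base := (phi [ffun=> false]).

Lemma pm_phi a : perfect_matching (phi a).
Proof.
have : phi a \in X by rewrite XE; apply/imsetP; exists a.
by move/(subsetP X_pm); rewrite inE.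
Qed.

Lemma hamming_drop_coord a i : a i -> hamming (drop_coord a i) a = 1.
Proof.
move=> ai; rewrite /hamming (_ : [set k | drop_coord a i k != a k] = [set i]) ?cards1 //.
apply/setP => k; rewrite !inE ffunE; case: (eqVneq k i) => [->|nki]; first by rewrite ai.
by rewrite andbT eqxx.
Qed.

Lemma radj_drop_coord a i : a i ->
  exists2 g, g \in S & phi a = symdiff (phi (drop_coord a i)) (hexE S g).
Proof.
move=> ai; have := radj_phi (drop_coord a i) a; rewrite hamming_drop_coord // eqxx.
by case/hasP => g gS /eqP eqg; exists g; rewrite // -eqg symdiffKl.
Qed.

Lemma card_drop_coord a i : a i ->
  (#|[set k | drop_coord a i k]| < #|[set k | a k]|)%N.
Proof.
move=> ai; rewrite (cardsD1 i [set k | a k]) inE ai add1n ltnS subset_leq_card //.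
by apply/subsetP => k; rewrite !inE ffunE andbC.
Qed.

Lemma drop_coordC a i j : drop_coord (drop_coord a i) j = drop_coord (drop_coord a j) i.
Proof. by apply/ffunP => k; rewrite !ffunE -!andbA [(k != i) && _]andbC. Qed.

Lemma drop_unit_vec i : drop_coord (unit_vec i) i = [ffun=> false].
Proof. by apply/ffunP => k; rewrite !ffunE; case: (eqVneq k i). Qed.

Definition cube_hex i :=
  nth pt0 S (find (fun h => symdiff base (phi (unit_vec i)) == hexE S h) S).
Local Notation hh := cube_hex.
Local Notation H i := (hexE S (hh i)).

Lemma cube_hexP i : hh i \in S /\ phi (unit_vec i) = symdiff base (H i).
Proof.
have /hasP [h hS hE] : radj base (phi (unit_vec i)).
  by rewrite radj_phi -(drop_unit_vec i) hamming_drop_coord // ffunE eqxx.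
have hs : has (fun h => symdiff base (phi (unit_vec i)) == hexE S h) S by apply/hasP; exists h.
split; first by rewrite /hh mem_nth // -has_find.
by have /eqP <- := nth_find pt0 hs; rewrite symdiffKl.
Qed.

Lemma cube_hexS i : hh i \in S. Proof. by case: (cube_hexP i). Qed.

Lemma phi_unit_vec i : phi (unit_vec i) = symdiff base (H i).
Proof. by case: (cube_hexP i). Qed.

Lemma cube_hex_inj : injective hh.
Proof.
move=> i j eqij; have := phi_unit_vec i; rewrite eqij -phi_unit_vec => /phi_inj/ffunP/(_ i).
by rewrite !ffunE eqxx => /esym/eqP.
Qed.

(* Induction on the weight of [a], closing squares of the cube with [hexE_square]. *)
Lemma phi_drop_coord a i : a i -> phi a = symdiff (phi (drop_coord a i)) (H i).
Proof.
have [w] := ubnP #|[set k | a k]|; elim: w a i => // w IHw a i wa ai.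
have IH b k : (#|[set k | b k]| < #|[set k | a k]|)%N -> b k ->
    phi b = symdiff (phi (drop_coord b k)) (H k).
  by move=> wb bk; apply: IHw bk; apply: leq_trans wb _; rewrite -ltnS.
case: (pickP (fun j => a j && (j != i))) => [j /andP[aj nji] | none]; last first.
  have -> : a = unit_vec i.
    apply/ffunP => k; rewrite ffunE; case: (eqVneq k i) => [-> // | nki].
    by have := none k; rewrite nki andbT.
  by rewrite drop_unit_vec phi_unit_vec.
set a3 := drop_coord (drop_coord a i) j.
have phi_i : phi (drop_coord a i) = symdiff (phi a3) (H j).
  by apply: IH; [exact: card_drop_coord | rewrite ffunE aj].
have phi_j : phi (drop_coord a j) = symdiff (phi a3) (H i).
  by rewrite /a3 drop_coordC; apply: IH; [exact: card_drop_coord | rewrite ffunE ai eq_sym].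
have [g gS phi_g] := radj_drop_coord ai.
have [g' g'S phi_g'] := radj_drop_coord aj.
have square : symdiff (H j) (hexE S g) = symdiff (H i) (hexE S g').
  by apply: (@symdiff_inj _ (phi a3)); rewrite -!symdiffA -phi_i -phi_j -phi_g -phi_g'.
have ngj : g != hh j.
  apply/eqP => eqg; have : phi a = phi a3 by rewrite phi_g eqg phi_i symdiffKr.
  by move/phi_inj/ffunP/(_ i); rewrite !ffunE ai eqxx.
have nji' : hh j != hh i by rewrite (inj_eq cube_hex_inj).
by rewrite phi_g (hexE_square cellS (cube_hexS j) (cube_hexS i) gS g'S square nji' ngj).
Qed.

Lemma alternating_base i : alternating base (hh i).
Proof.
apply: alternating_of_flip (cube_hexS i) (pm_phi _) _.
by rewrite -phi_unit_vec pm_phi.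
Qed.

(* At a common vertex, the flips along [hh i] and then [hh j] force two distinct
   edges into both hexagons. *)
Lemma cube_hex_disj i j : i != j -> [disjoint hexV S (hh i) & hexV S (hh j)].
Proof.
move=> nij; rewrite -setI_eq0; apply/set0Pn => -[v /setIP [vi vj]].
set Mi := symdiff base (H i).
have pmMi : perfect_matching Mi by rewrite /Mi -phi_unit_vec pm_phi.
have phi_ij : phi [ffun k => (k == i) || (k == j)] = symdiff Mi (H j).
  rewrite (@phi_drop_coord _ j) ?ffunE ?eqxx ?orbT // /Mi -phi_unit_vec.
  congr (symdiff (phi _) _); apply/ffunP => k; rewrite !ffunE.
  by case: (eqVneq k j) => [->|]; rewrite ?andbF ?andbT ?orbF // eq_sym (negbTE nij).
have altMi_i : alternating Mi (hh i).
  by apply: alternating_of_flip (cube_hexS i) pmMi _; rewrite /Mi symdiffKr pm_phi.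
have altMi_j : alternating Mi (hh j).
  by apply: alternating_of_flip (cube_hexS j) pmMi _; rewrite -phi_ij pm_phi.
have matched_in M k y : perfect_matching M -> alternating M (hh k) ->
    v \in hexV S (hh k) -> M :&: edges_at v = [set y] -> y \in H k.
  move=> pmM altM vk eqy; apply: (subsetP (pm_alternating_edges_at (cube_hexS k) pmM altM vk)).
  by rewrite eqy set11.
have [m eqm] := pm_edge_at v (pm_phi [ffun=> false]).
have [m' eqm'] := pm_edge_at v pmMi.
have mi := matched_in _ _ _ (pm_phi _) (alternating_base i) vi eqm.
have mj := matched_in _ _ _ (pm_phi _) (alternating_base j) vj eqm.
have m'i := matched_in _ _ _ pmMi altMi_i vi eqm'.
have m'j := matched_in _ _ _ pmMi altMi_j vj eqm'.
have nmm' : m != m'.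
  have /setIP [mb _] : m \in base :&: edges_at v by rewrite eqm set11.
  have /setIP [] : m' \in Mi :&: edges_at v by rewrite eqm' set11.
  by rewrite in_symdiff m'i addbT => nb _; apply: (contraNneq _ nb) => <-.
have : (1 < #|H i :&: H j|)%N by apply/card_gt1P; exists m, m'; rewrite !in_setI mi mj m'i m'j.
by move/(hexE_meet_gt1 cellS (cube_hexS i) (cube_hexS j))/cube_hex_inj/eqP; rewrite (negbTE nij).
Qed.

Lemma phi_flip a : phi a = flip hh base a.
Proof.
have [w] := ubnP #|[set k | a k]|; elim: w a => // w IHw a wa.
case: (pickP a) => [i ai | a0]; last first.
  have -> : a = [ffun=> false] by apply/ffunP => k; rewrite ffunE a0.
  by rewrite flip0.
rewrite (phi_drop_coord ai) IHw; last by apply: leq_trans (card_drop_coord ai) _; rewrite -ltnS.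
symmetry; apply: (flip_toggle base cube_hex_disj) => k; rewrite ffunE.
by case: (eqVneq k i) => [->|]; rewrite ?ai ?andbT ?addbF.
Qed.

Lemma fC_cube_cover : fC (resonant_cover hh base) = X.
Proof.
rewrite (fC_cover cellS cube_hexS cube_hex_disj (pm_phi _) alternating_base) XE.
by apply/setP => Y; apply/imsetP/imsetP => -[a _ ->]; exists a; rewrite ?(phi_flip a).
Qed.

End CubeResonant.

Lemma cube_sub_resonant S (cellS : all is_cell S) (X : {set {set EH S}}) :
  cube_sub X -> exists n (hh : 'I_n -> point) (M : {set EH S}),
  resonant hh M /\ fC (resonant_cover hh M) = X.
Proof.
case=> X_pm [n [phi [phi_inj XE radj_phi]]].
exists n, (cube_hex phi), (phi [ffun=> false]).
split; last exact: fC_cube_cover.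
split=> [i | i j | | i]; first exact: cube_hexS.
- exact: (cube_hex_disj cellS X_pm).
- exact: (pm_phi X_pm).
- exact: (alternating_base X_pm).
Qed.

Theorem theorem2 (S : seq point) :
  hexagonal_system S -> kekulean S ->
  [/\ (forall C : {set EH S}, clar_cover C -> cube_sub (fC C)),
      (forall C C' : {set EH S}, clar_cover C -> clar_cover C' -> fC C = fC C' -> C = C'),
      (forall X : {set {set EH S}}, cube_sub X ->
          exists2 C : {set EH S}, clar_cover C & fC C = X)
    & (forall C C' : {set EH S}, clar_cover C -> clar_cover C' ->
          clar_le C C' = (fC C \subset fC C'))].
Proof.
case=> _ cellS _ _ _.
have bigcup_fC (C : {set EH S}) : clar_cover C -> \bigcup_(X in fC C) X = C.
  move=> clarC.
  have [n [hh [M [[hhS disj pmM altM] ->]]]] := clar_cover_resonant_cover cellS clarC.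
  exact: bigcup_fC_cover.
split; last by move=> C C' _ _; rewrite /clar_le.
- move=> C clarC.
  have [n [hh [M [[hhS disj pmM altM] ->]]]] := clar_cover_resonant_cover cellS clarC.
  exact: cube_sub_fC_cover.
- by move=> C C' /bigcup_fC eqC /bigcup_fC eqC' eqf; rewrite -eqC -eqC' eqf.
move=> X cubeX; have [n [hh [M [[hhS disj pmM altM] <-]]]] := cube_sub_resonant cellS cubeX.
by exists (resonant_cover hh M); first exact: clar_cover_resonant.
Qed.
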